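(* Let $\Gamma=(V,E)$ be a graph. If for each $v\in V$ the monoid $M_v$ is embeddable in a group $G_v$, then the graph product $\Gamma_{v\in V}M_v$ is embeddable in the group $\Gamma_{v\in V}G_v$.
   Context: A graph $\Gamma=(V,E)$ has vertex set $V$ and irreflexive symmetric edge relation $E$. The graph product $\Gamma_{v\in V}M_v$ of pairwise disjoint monoids $M_v$ is the quotient of their free product by the congruence generated by all pairs $(mn,nm)$ with $m\in M_u$, $n\in M_v$, $(u,v)\in E$ (for groups this is the usual graph product of groups). *)

From Stdlib Require Import List.
Import ListNotations.


Record monoid := Monoid {
  mcar :> Type;
  mop : mcar -> mcar -> mcar;
  mone : mcar;
  massoc : forall x y z, mop x (mop y z) = mop (mop x y) z;
  mone_l : forall x, mop mone x = x;
  mone_r : forall x, mop x mone = x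
}.
Arguments mop {m} _ _.
Arguments mone m : assert.

Definition is_group (G : monoid) : Prop :=
  forall x : G, exists y : G, mop x y = mone G /\ mop y x = mone G.

Definition monoid_hom (M N : monoid) (f : M -> N) : Prop :=
  f (mone M) = mone N /\ forall x y : M, f (mop x y) = mop (f x) (f y).

Definition monoid_embeddable (M N : monoid) : Prop :=
  exists f : M -> N, monoid_hom M N f /\ (forall x y, f x = f y -> x = y).

Definition is_graph {V : Type} (E : V -> V -> Prop) : Prop :=
  (forall v, ~ E v v) /\ (forall u v, E u v -> E v u).

(* Words in the free monoid on the disjoint union of the M_v
   (disjointness is built in via the dependent pair). *)
Definition gword (V : Type) (M : V -> monoid) := list {v : V & M v}.

(* Defining relations: those of the free product (units of the factors are
   trivial, adjacent letters from the same factor multiply), plus the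
   commutation relations mn = nm for m in M_u, n in M_v, (u,v) in E. *)
Inductive gp_basic {V : Type} (E : V -> V -> Prop) (M : V -> monoid)
  : gword V M -> gword V M -> Prop :=
| gpb_one v : gp_basic E M [existT _ v (mone (M v))] []
| gpb_mul v (a b : M v) :
    gp_basic E M [existT _ v a; existT _ v b] [existT _ v (mop a b)]
| gpb_comm u v (m : M u) (n : M v) :
    E u v -> gp_basic E M [existT _ u m; existT _ v n] [existT _ v n; existT _ u m].

(* The congruence on the free monoid generated by gp_basic.  The graph
   product of the M_v is the quotient monoid (gword V M) / gp_cong E M. *)
Inductive gp_cong {V : Type} (E : V -> V -> Prop) (M : V -> monoid)
  : gword V M -> gword V M -> Prop :=
| gpc_base x y : gp_basic E M x y -> gp_cong E M x y
| gpc_refl x : gp_cong E M x x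
| gpc_sym x y : gp_cong E M x y -> gp_cong E M y x
| gpc_trans x y z : gp_cong E M x y -> gp_cong E M y z -> gp_cong E M x z
| gpc_ctx a b x y : gp_cong E M x y -> gp_cong E M (a ++ x ++ b) (a ++ y ++ b).

(* The graph product of the M embeds in the graph product of the G:
   an injective monoid homomorphism between the quotient monoids, given
   on representatives (well defined, injective, multiplicative, unital). *)
Definition gp_embeddable {V : Type} (E : V -> V -> Prop)
  (M G : V -> monoid) : Prop :=
  exists phi : gword V M -> gword V G,
    (forall w w', gp_cong E M w w' -> gp_cong E G (phi w) (phi w')) /\
    (forall w w', gp_cong E G (phi w) (phi w') -> gp_cong E M w w') /\
    gp_cong E G (phi []) [] /\
    (forall w w', gp_cong E G (phi (w ++ w')) (phi w ++ phi w')).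

From Stdlib Require Import List Relations Classical IndefiniteDescription
  ClassicalDescription Eqdep Lia.
Import ListNotations.

(* Modulo the commutation relations alone, words form the trace monoid of the
   graph. Right multiplication by a letter acts on reduced words up to shuffle,
   by merging the letter into the final syllable at its vertex, and this action
   respects all defining relations of the graph product; so every word is
   equivalent to a reduced word, its normal form, which is unique up to shuffle.
   Applying the factor embeddings letter by letter commutes with normal forms,
   and every shuffle of an image word is again an image, so two words with
   equivalent images have shuffle-equivalent normal forms and are equivalent. *)

Lemma app_cons_eq_app_pair {A : Type} (s t a b : list A) (x p q : A) :
  s ++ x :: t = a ++ p :: q :: b ->
  (exists s1, s = a ++ p :: q :: s1 /\ b = s1 ++ x :: t) \/
  (s = a ++ [p] /\ x = q /\ t = b) \/
  (s = a /\ x = p /\ t = q :: b) \/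
  (exists t1, a = s ++ x :: t1 /\ t = t1 ++ p :: q :: b).
Proof.
  revert a; induction s as [|s0 s IH]; intros [|a0 a] H; simpl in H.
  - injection H as -> ->. right; right; left; auto.
  - injection H as -> ->. right; right; right. exists a; split; reflexivity.
  - injection H as -> H. destruct s as [|s1 s]; simpl in H; injection H as -> <-.
    + right; left; auto.
    + left. exists s; auto.
  - injection H as -> H.
    destruct (IH a H) as [(s1 & -> & ->) | [(-> & -> & ->) | [(-> & -> & ->) | (t1 & -> & ->)]]].
    + left. exists s1; auto.
    + right; left; auto.
    + right; right; left; auto.
    + right; right; right. exists t1; auto.
Qed.

Section Traces.
Variable V : Type.
Variable E : V -> V -> Prop.
Hypothesis E_irrefl : forall v, ~ E v v.
Hypothesis E_sym : forall u v, E u v -> E v u.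
Variable M : V -> monoid.

Local Notation letter := {v : V & M v}.
Local Notation word := (list letter).

Definition vertex (x : letter) : V := projT1 x.
Definition commute (x y : letter) : Prop := E (vertex x) (vertex y).

Lemma commute_sym x y : commute x y -> commute y x.
Proof. apply E_sym. Qed.

Definition swap (w w' : word) : Prop :=
  exists a b x y, w = a ++ x :: y :: b /\ w' = a ++ y :: x :: b /\ commute x y.

Definition shuffle : relation word := clos_refl_trans_n1 word swap.

Lemma shuffle_refl w : shuffle w w.
Proof. apply rtn1_refl. Qed.

Lemma shuffle_swap a b x y : commute x y -> shuffle (a ++ x :: y :: b) (a ++ y :: x :: b).
Proof.
  intros H. eapply Relation_Operators.rtn1_trans; [exists a, b, x, y; auto | apply rtn1_refl].
Qed.

Lemma shuffle_trans w1 w2 w3 : shuffle w1 w2 -> shuffle w2 w3 -> shuffle w1 w3.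
Proof.
  intros H1 H2. apply clos_rt_rtn1.
  apply rt_trans with w2; apply clos_rtn1_rt; assumption.
Qed.

Lemma shuffle_sym w w' : shuffle w w' -> shuffle w' w.
Proof.
  induction 1 as [|w2 w3 (a & b & x & y & -> & -> & Hxy) _ IH]; [apply shuffle_refl|].
  apply shuffle_trans with (a ++ x :: y :: b); auto using shuffle_swap, commute_sym.
Qed.

Lemma shuffle_app a b w w' : shuffle w w' -> shuffle (a ++ w ++ b) (a ++ w' ++ b).
Proof.
  induction 1 as [|w2 w3 (a0 & b0 & x & y & -> & -> & Hxy) _ IH]; [apply shuffle_refl|].
  apply (shuffle_trans _ _ _ IH).
  rewrite <- !app_assoc; simpl; rewrite !(app_assoc a a0). now apply shuffle_swap.
Qed.

Lemma shuffle_appl a w w' : shuffle w w' -> shuffle (a ++ w) (a ++ w').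
Proof. intros H. pose proof (shuffle_app a [] _ _ H) as H'. now rewrite !app_nil_r in H'. Qed.

Lemma shuffle_appr b w w' : shuffle w w' -> shuffle (w ++ b) (w' ++ b).
Proof. exact (shuffle_app [] b w w'). Qed.

Lemma shuffle_length w w' : shuffle w w' -> length w = length w'.
Proof.
  induction 1 as [|w2 w3 (a & b & x & y & -> & -> & _) _ IH]; [reflexivity|].
  rewrite IH, !length_app. reflexivity.
Qed.

Lemma shuffle_move_last t x q :
  Forall (commute x) q -> shuffle (t ++ x :: q) (t ++ q ++ [x]).
Proof.
  revert t; induction q as [|y q IH]; intros t Hq; [apply shuffle_refl|].
  inversion_clear Hq as [|? ? Hxy Hq'].
  apply shuffle_trans with ((t ++ [y]) ++ x :: q).
  - rewrite <- app_assoc. now apply shuffle_swap.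
  - replace (t ++ (y :: q) ++ [x]) with ((t ++ [y]) ++ q ++ [x])
      by now rewrite <- app_assoc.
    exact (IH _ Hq').
Qed.

Lemma shuffle_snoc_l r x w : shuffle (r ++ [x]) w ->
  exists s t, w = s ++ x :: t /\ Forall (commute x) t /\ shuffle r (s ++ t).
Proof.
  induction 1 as [|w2 w3 (a & b & p & q & Hw & -> & Hpq) _ IH].
  { exists r, []. rewrite app_nil_r. auto using shuffle_refl. }
  destruct IH as (s & t & Hst & Ht & Hr). rewrite Hw in Hst. symmetry in Hst.
  destruct (app_cons_eq_app_pair _ _ _ _ _ _ _ Hst)
    as [(s1 & -> & ->) | [(-> & -> & ->) | [(-> & -> & ->) | (t1 & -> & ->)]]].
  - exists (a ++ q :: p :: s1), t. rewrite <- !app_assoc. repeat split; auto.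
    apply (shuffle_trans _ _ _ Hr). rewrite <- !app_assoc. now apply shuffle_swap.
  - exists a, (p :: b). rewrite <- app_assoc in Hr. auto using commute_sym.
  - inversion_clear Ht. exists (a ++ [q]), b. rewrite <- !app_assoc. auto.
  - exists s, (t1 ++ q :: p :: b). rewrite <- app_assoc. repeat split; auto.
    + apply Forall_app in Ht as [Ht1 Ht2]. inversion_clear Ht2. inversion_clear H0.
      apply Forall_app; auto.
    + apply (shuffle_trans _ _ _ Hr). rewrite !app_assoc. now apply shuffle_swap.
Qed.

Lemma shuffle_snoc r x s y : shuffle (r ++ [x]) (s ++ [y]) ->
  (x = y /\ shuffle r s) \/
  (commute x y /\ exists t, shuffle r (t ++ [y]) /\ shuffle s (t ++ [x])).
Proof.
  intros H. destruct (shuffle_snoc_l _ _ _ H) as (s0 & t & Hs & Ht & Hr).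
  destruct t as [|z t _] using rev_ind.
  - rewrite app_nil_r in Hr. apply app_inj_tail in Hs as [-> ->]. auto.
  - rewrite app_comm_cons, app_assoc in Hs. apply app_inj_tail in Hs as [-> ->].
    apply Forall_app in Ht as [Ht Hy]. inversion_clear Hy.
    right. split; [assumption|]. exists (s0 ++ t). split.
    + now rewrite <- app_assoc.
    + rewrite <- app_assoc. now apply shuffle_move_last.
Qed.

Lemma shuffle_snoc_app r x p q : shuffle (r ++ [x]) (p ++ q) ->
  (exists q', shuffle q (q' ++ [x]) /\ shuffle r (p ++ q')) \/
  (exists p', shuffle p (p' ++ [x]) /\ shuffle r (p' ++ q) /\ Forall (commute x) q).
Proof.
  intros H. destruct (shuffle_snoc_l _ _ _ H) as (s & t & Hpq & Ht & Hr).
  clear H. destruct (app_eq_app _ _ _ _ Hpq) as [[|y l] [[-> Hq] | [-> ->]]];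
    clear Hpq; rewrite ?app_nil_r in *; simpl in *.
  - subst q. left. exists t. split; [exact (shuffle_move_last [] _ _ Ht) | assumption].
  - left. exists t. split; [exact (shuffle_move_last [] _ _ Ht) | assumption].
  - injection Hq as <- ->. apply Forall_app in Ht as [Hl Hq].
    right. exists (s ++ l). rewrite <- !app_assoc in *. auto using shuffle_move_last.
  - left. exists (y :: l ++ t). rewrite <- !app_assoc in *. split; [|assumption].
    simpl. rewrite <- app_assoc. exact (shuffle_move_last (y :: l) _ _ Ht).
Qed.

Definition nontrivial (x : letter) : Prop := projT2 x <> mone (M (projT1 x)).

Definition no_final (v : V) (r : word) : Prop :=
  forall r' y, shuffle r (r' ++ [y]) -> vertex y <> v.

Definition reduced_tail (p : word) : Prop :=
  forall p' y, shuffle p (p' ++ [y]) -> nontrivial y /\ no_final (vertex y) p'.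

(* Reduced words, characterised through their left factors up to shuffle:
   final letters are nontrivial and no two of them share a vertex, so no letter
   can be deleted or merged with another one. *)
Definition reduced (r : word) : Prop :=
  forall p q, shuffle r (p ++ q) -> reduced_tail p.

Lemma reduced_shuffle r r' : shuffle r r' -> reduced r -> reduced r'.
Proof. intros H Hr p q H'. exact (Hr p q (shuffle_trans _ _ _ H H')). Qed.

Lemma reduced_prefix r e : reduced (r ++ e) -> reduced r.
Proof.
  intros H p q Hs. apply (H p (q ++ e)). rewrite app_assoc. now apply shuffle_appr.
Qed.

Lemma reduced_tail_reduced r : reduced r -> reduced_tail r.
Proof. intros H. apply (H r []). rewrite app_nil_r. apply shuffle_refl. Qed.

Lemma reduced_nil : reduced [].
Proof.
  intros p q H. apply shuffle_length in H. rewrite length_app in H.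
  destruct p; [|simpl in H; lia].
  intros p' y H'. apply shuffle_length in H'. rewrite length_app in H'. simpl in H'. lia.
Qed.

Lemma reduced_snoc r v (d : M v) :
  reduced r -> no_final v r -> d <> mone (M v) -> reduced (r ++ [existT _ v d]).
Proof.
  intros Hr Hfin Hd p q H. set (x := existT _ v d) in *.
  destruct (shuffle_snoc_app _ _ _ _ H) as [(q' & _ & Hrp) | (p' & Hp & Hrp & Hq)].
  { exact (Hr p q' Hrp). }
  intros p1 y Hy.
  destruct (shuffle_snoc _ _ _ _ (shuffle_trans _ _ _ (shuffle_sym _ _ Hp) Hy))
    as [[<- Hp1] | [Hxy (t & Ht & Hp1)]].
  - split; [exact Hd|]. intros p'' z Hz Hzv.
    apply (Hfin (p'' ++ q) z); [|exact Hzv].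
    apply (shuffle_trans _ _ _ Hrp). rewrite <- app_assoc.
    apply (shuffle_trans _ ((p'' ++ [z]) ++ q)).
    + apply shuffle_appr, (shuffle_trans _ _ _ Hp1 Hz).
    + rewrite <- app_assoc. apply shuffle_move_last.
      unfold commute in *. now rewrite Hzv.
  - assert (Hty : reduced_tail (t ++ [y])).
    { apply (Hr _ q), (shuffle_trans _ _ _ Hrp), shuffle_appr, Ht. }
    destruct (Hty t y (shuffle_refl _)) as [Hy_nt Hy_fin].
    split; [exact Hy_nt|]. intros p'' z Hz Hzy.
    destruct (shuffle_snoc _ _ _ _ (shuffle_trans _ _ _ (shuffle_sym _ _ Hz) Hp1))
      as [[-> _] | [_ (t' & _ & Ht')]].
    + apply (E_irrefl (vertex x)). unfold commute in Hxy. now rewrite <- Hzy in Hxy.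
    + exact (Hy_fin t' z Ht' Hzy).
Qed.

Definition syllable (v : V) (s : M v) : word :=
  if excluded_middle_informative (s = mone (M v)) then [] else [existT _ v s].

Lemma syllable_one v : syllable v (mone (M v)) = [].
Proof. unfold syllable. destruct excluded_middle_informative; congruence. Qed.

Lemma syllable_nontrivial v s : s <> mone (M v) -> syllable v s = [existT _ v s].
Proof. unfold syllable. destruct excluded_middle_informative; congruence. Qed.

Lemma reduced_split_final r v : reduced r ->
  exists r0 s, shuffle r (r0 ++ syllable v s) /\ no_final v r0.
Proof.
  intros Hr. destruct (classic (exists r' y, shuffle r (r' ++ [y]) /\ vertex y = v))
    as [(r' & [v' s] & H & Hv) | Hno].
  - simpl in Hv. subst v'. destruct (reduced_tail_reduced _ Hr r' _ H) as [Hs Hfin].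
    exists r', s. now rewrite syllable_nontrivial.
  - exists r, (mone (M v)). rewrite syllable_one, app_nil_r.
    split; [apply shuffle_refl|]. intros r' y Hy Hv. eauto.
Qed.

Lemma split_final_unique v r0 s r1 s1 :
  shuffle (r0 ++ syllable v s) (r1 ++ syllable v s1) -> no_final v r0 -> no_final v r1 ->
  s = s1 /\ shuffle r0 r1.
Proof.
  intros H H0 H1.
  destruct (classic (s = mone (M v))) as [-> | Hs];
    destruct (classic (s1 = mone (M v))) as [-> | Hs1].
  - rewrite syllable_one, !app_nil_r in H. auto.
  - rewrite syllable_one, app_nil_r, syllable_nontrivial in H by exact Hs1.
    exfalso. exact (H0 _ _ H eq_refl).
  - rewrite syllable_one, app_nil_r, syllable_nontrivial in H by exact Hs.
    exfalso. exact (H1 _ _ (shuffle_sym _ _ H) eq_refl).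
  - rewrite !syllable_nontrivial in H by assumption.
    destruct (shuffle_snoc _ _ _ _ H) as [[Heq Hr] | [Hvv _]].
    + apply inj_pair2 in Heq. auto.
    + exfalso. exact (E_irrefl v Hvv).
Qed.

Definition split_final_spec (r : word) (v : V) (p : word * M v) : Prop :=
  reduced r -> shuffle r (fst p ++ syllable v (snd p)) /\ no_final v (fst p).

Lemma split_final_spec_exists r v : exists p, split_final_spec r v p.
Proof.
  destruct (classic (reduced r)) as [Hr | Hr].
  - destruct (reduced_split_final r v Hr) as (r0 & s & Hs). now exists (r0, s).
  - exists ([], mone (M v)). now intros.
Qed.

Definition split_final (r : word) (v : V) : word * M v :=
  proj1_sig (constructive_indefinite_description _ (split_final_spec_exists r v)).

Lemma split_final_correct r v : split_final_spec r v (split_final r v).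
Proof. unfold split_final. now destruct constructive_indefinite_description. Qed.

(* Merge the letter into the final syllable at its vertex, which is unique up
   to shuffle by [split_final_unique]. *)
Definition act (r : word) (x : letter) : word :=
  match x with
  | existT _ v a => fst (split_final r v) ++ syllable v (mop (snd (split_final r v)) a)
  end.

Lemma act_spec r v r0 s a : reduced r -> shuffle r (r0 ++ syllable v s) -> no_final v r0 ->
  shuffle (act r (existT _ v a)) (r0 ++ syllable v (mop s a)).
Proof.
  intros Hr H Hfin. simpl. destruct (split_final_correct r v Hr) as [H1 H2].
  destruct (split_final_unique v _ _ _ _ (shuffle_trans _ _ _ (shuffle_sym _ _ H1) H) H2 Hfin)
    as [-> Hs].
  now apply shuffle_appr.
Qed.

Lemma reduced_app_syllable r v s : reduced r -> no_final v r -> reduced (r ++ syllable v s).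
Proof.
  intros Hr Hfin. destruct (classic (s = mone (M v))) as [-> | Hs].
  - now rewrite syllable_one, app_nil_r.
  - rewrite syllable_nontrivial by exact Hs. now apply reduced_snoc.
Qed.

Lemma reduced_act r x : reduced r -> reduced (act r x).
Proof.
  intros Hr. destruct x as [v a]. destruct (reduced_split_final r v Hr) as (r0 & s & H & Hfin).
  apply (reduced_shuffle _ _ (shuffle_sym _ _ (act_spec _ _ _ _ a Hr H Hfin))).
  apply reduced_app_syllable; [|exact Hfin].
  exact (reduced_prefix _ _ (reduced_shuffle _ _ H Hr)).
Qed.

Lemma act_shuffle r1 r2 x : reduced r1 -> shuffle r1 r2 -> shuffle (act r1 x) (act r2 x).
Proof.
  intros Hr H. destruct x as [v a]. destruct (reduced_split_final r1 v Hr) as (r0 & s & H0 & Hfin).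
  apply (shuffle_trans _ _ _ (act_spec _ _ _ _ a Hr H0 Hfin)), shuffle_sym, act_spec;
    [exact (reduced_shuffle _ _ H Hr) | | exact Hfin].
  exact (shuffle_trans _ _ _ (shuffle_sym _ _ H) H0).
Qed.

Lemma act_one r v : reduced r -> shuffle (act r (existT _ v (mone (M v)))) r.
Proof.
  intros Hr. destruct (reduced_split_final r v Hr) as (r0 & s & H & Hfin).
  apply (shuffle_trans _ _ _ (act_spec _ _ _ _ _ Hr H Hfin)).
  rewrite mone_r. now apply shuffle_sym.
Qed.

Lemma act_mul r v a b : reduced r ->
  shuffle (act (act r (existT _ v a)) (existT _ v b)) (act r (existT _ v (mop a b))).
Proof.
  intros Hr. destruct (reduced_split_final r v Hr) as (r0 & s & H & Hfin).
  pose proof (act_spec _ _ _ _ a Hr H Hfin) as Ha.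
  apply (shuffle_trans _ _ _ (act_spec _ _ _ _ b (reduced_act _ _ Hr) Ha Hfin)).
  rewrite <- massoc. apply shuffle_sym. now apply act_spec.
Qed.

Lemma no_final_app_syllable u v r s :
  E u v -> no_final v r -> no_final v (r ++ syllable u s).
Proof.
  intros Huv Hfin. destruct (classic (s = mone (M u))) as [-> | Hs].
  - now rewrite syllable_one, app_nil_r.
  - rewrite syllable_nontrivial by exact Hs. intros r' y Hy Hv.
    destruct (shuffle_snoc _ _ _ _ Hy) as [[<- _] | [_ (t & Ht & _)]].
    + simpl in Hv. subst. exact (E_irrefl _ Huv).
    + exact (Hfin _ _ Ht Hv).
Qed.

Lemma no_final_app_syllable_inv u v r s :
  E u v -> no_final v (r ++ syllable u s) -> no_final v r.
Proof.
  intros Huv Hfin p z Hz Hzv. apply (Hfin (p ++ syllable u s) z); [|exact Hzv].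
  apply (shuffle_trans _ ((p ++ [z]) ++ syllable u s)); [now apply shuffle_appr|].
  rewrite <- !app_assoc. apply shuffle_move_last.
  unfold syllable. destruct excluded_middle_informative; constructor; [|constructor].
  unfold commute. simpl. rewrite Hzv. now apply E_sym.
Qed.

Lemma syllable_commute u v s t :
  E u v -> shuffle (syllable u s ++ syllable v t) (syllable v t ++ syllable u s).
Proof.
  intros Huv. destruct (classic (s = mone (M u))) as [-> | Hs].
  - rewrite syllable_one, app_nil_r. apply shuffle_refl.
  - destruct (classic (t = mone (M v))) as [-> | Ht].
    + rewrite syllable_one, app_nil_r. apply shuffle_refl.
    + rewrite !syllable_nontrivial by assumption. apply (shuffle_swap [] []). exact Huv.
Qed.

Lemma act_act_adjacent r r0 u v s t m n :
  reduced r -> E u v -> shuffle r (r0 ++ syllable u s ++ syllable v t) ->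
  no_final u r0 -> no_final v r0 ->
  shuffle (act (act r (existT _ u m)) (existT _ v n))
          (r0 ++ syllable u (mop s m) ++ syllable v (mop t n)).
Proof.
  intros Hr Huv H Hu Hv.
  assert (Hsu : shuffle r ((r0 ++ syllable v t) ++ syllable u s)).
  { apply (shuffle_trans _ _ _ H). rewrite <- app_assoc.
    now apply shuffle_appl, syllable_commute. }
  pose proof (act_spec _ _ _ _ m Hr Hsu (no_final_app_syllable v u _ _ (E_sym _ _ Huv) Hu))
    as Hm.
  assert (Hsv : shuffle (act r (existT _ u m)) ((r0 ++ syllable u (mop s m)) ++ syllable v t)).
  { apply (shuffle_trans _ _ _ Hm). rewrite <- !app_assoc.
    now apply shuffle_appl, syllable_commute, E_sym. }
  rewrite app_assoc.
  exact (act_spec _ _ _ _ n (reduced_act _ _ Hr) Hsv (no_final_app_syllable u v _ _ Huv Hv)).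
Qed.

Lemma act_comm r u v m n : reduced r -> E u v ->
  shuffle (act (act r (existT _ u m)) (existT _ v n))
          (act (act r (existT _ v n)) (existT _ u m)).
Proof.
  intros Hr Huv. destruct (reduced_split_final r v Hr) as (r1 & t & H & Hv1).
  assert (Hr1 : reduced r1) by exact (reduced_prefix _ _ (reduced_shuffle _ _ H Hr)).
  destruct (reduced_split_final r1 u Hr1) as (r0 & s & H0 & Hu).
  assert (Hv : no_final v r0).
  { apply (no_final_app_syllable_inv u v r0 s Huv).
    intros p z Hz. exact (Hv1 p z (shuffle_trans _ _ _ H0 Hz)). }
  assert (Huv_split : shuffle r (r0 ++ syllable u s ++ syllable v t)).
  { apply (shuffle_trans _ _ _ H). rewrite app_assoc. now apply shuffle_appr. }
  apply (shuffle_trans _ _ _ (act_act_adjacent _ _ _ _ _ _ m n Hr Huv Huv_split Hu Hv)).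
  apply (shuffle_trans _ _ _ (shuffle_appl _ _ _ (syllable_commute _ _ _ _ Huv))).
  apply shuffle_sym, act_act_adjacent; auto.
  apply (shuffle_trans _ _ _ Huv_split). now apply shuffle_appl, syllable_commute.
Qed.

Lemma reduced_fold_act w r : reduced r -> reduced (fold_left act w r).
Proof. revert r; induction w; simpl; auto using reduced_act. Qed.

Lemma fold_act_shuffle w r1 r2 : reduced r1 -> shuffle r1 r2 ->
  shuffle (fold_left act w r1) (fold_left act w r2).
Proof. revert r1 r2; induction w; simpl; auto using reduced_act, act_shuffle. Qed.

Lemma gp_cong_fold_act w w' : gp_cong E M w w' -> forall r1 r2, reduced r1 -> shuffle r1 r2 ->
  shuffle (fold_left act w r1) (fold_left act w' r2).
Proof.
  induction 1 as [w w' [v | v a b | u v m n Huv] | w | w w' _ IH | w1 w2 w3 _ IH1 _ IH2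
                 | a b w w' _ IH];
    intros r1 r2 Hr H12; cbn [fold_left].
  - exact (shuffle_trans _ _ _ (act_one _ _ Hr) H12).
  - exact (shuffle_trans _ _ _ (act_mul _ _ _ _ Hr) (act_shuffle _ _ _ Hr H12)).
  - apply (shuffle_trans _ _ _ (act_comm _ _ _ _ _ Hr Huv)).
    auto using act_shuffle, reduced_act.
  - now apply fold_act_shuffle.
  - apply shuffle_sym, IH; [exact (reduced_shuffle _ _ H12 Hr) | now apply shuffle_sym].
  - apply (shuffle_trans _ _ _ (IH1 _ _ Hr H12)).
    apply IH2; [exact (reduced_shuffle _ _ H12 Hr) | apply shuffle_refl].
  - rewrite !fold_left_app. apply fold_act_shuffle; [auto using reduced_fold_act|].
    apply IH; [auto using reduced_fold_act | now apply fold_act_shuffle].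
Qed.

Lemma gp_cong_appl a w w' : gp_cong E M w w' -> gp_cong E M (a ++ w) (a ++ w').
Proof. intros H. pose proof (gpc_ctx _ _ a [] _ _ H) as H'. now rewrite !app_nil_r in H'. Qed.

Lemma gp_cong_appr b w w' : gp_cong E M w w' -> gp_cong E M (w ++ b) (w' ++ b).
Proof. exact (gpc_ctx _ _ [] b w w'). Qed.

Lemma shuffle_gp_cong w w' : shuffle w w' -> gp_cong E M w w'.
Proof.
  induction 1 as [|w2 w3 (a & b & [u m] & [v n] & -> & -> & Huv) _ IH]; [apply gpc_refl|].
  apply (gpc_trans _ _ _ _ _ IH), (gpc_ctx _ _ a b [_; _] [_; _]), gpc_base, gpb_comm, Huv.
Qed.

Lemma syllable_gp_cong v s : gp_cong E M [existT _ v s] (syllable v s).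
Proof.
  destruct (classic (s = mone (M v))) as [-> | Hs].
  - rewrite syllable_one. apply gpc_base, gpb_one.
  - rewrite syllable_nontrivial by exact Hs. apply gpc_refl.
Qed.

Lemma syllable_mul_gp_cong v s a :
  gp_cong E M (syllable v s ++ [existT _ v a]) (syllable v (mop s a)).
Proof.
  destruct (classic (s = mone (M v))) as [-> | Hs].
  - rewrite syllable_one, mone_l. apply syllable_gp_cong.
  - rewrite syllable_nontrivial by exact Hs.
    apply (gpc_trans _ _ _ _ _ (gpc_base _ _ _ _ (gpb_mul _ _ v s a))), syllable_gp_cong.
Qed.

Lemma act_gp_cong r x : reduced r -> gp_cong E M (r ++ [x]) (act r x).
Proof.
  intros Hr. destruct x as [v a]. destruct (reduced_split_final r v Hr) as (r0 & s & H & Hfin).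
  apply (gpc_trans _ _ _ _ _ (gp_cong_appr _ _ _ (shuffle_gp_cong _ _ H))).
  apply (gpc_trans _ _ _ (r0 ++ syllable v (mop s a))).
  - rewrite <- app_assoc. apply gp_cong_appl, syllable_mul_gp_cong.
  - apply gpc_sym, shuffle_gp_cong, (act_spec _ _ _ _ a Hr H Hfin).
Qed.

Lemma fold_act_gp_cong w r : reduced r -> gp_cong E M (r ++ w) (fold_left act w r).
Proof.
  revert r; induction w as [|x w IH]; intros r Hr; simpl.
  - rewrite app_nil_r. apply gpc_refl.
  - apply (gpc_trans _ _ _ ((r ++ [x]) ++ w)); [rewrite <- app_assoc; apply gpc_refl|].
    apply (gpc_trans _ _ _ _ _ (gp_cong_appr _ _ _ (act_gp_cong _ x Hr))).
    apply IH, reduced_act, Hr.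
Qed.

Definition normal_form (w : word) : word := fold_left act w [].

Lemma reduced_normal_form w : reduced (normal_form w).
Proof. exact (reduced_fold_act w [] reduced_nil). Qed.

Lemma gp_cong_normal_form w : gp_cong E M w (normal_form w).
Proof. exact (fold_act_gp_cong w [] reduced_nil). Qed.

Lemma normal_form_shuffle w w' : gp_cong E M w w' -> shuffle (normal_form w) (normal_form w').
Proof. intros H. exact (gp_cong_fold_act _ _ H _ _ reduced_nil (shuffle_refl _)). Qed.

End Traces.

Lemma map_injective {A B : Type} (g : A -> B) :
  (forall x y, g x = g y -> x = y) -> forall l l', map g l = map g l' -> l = l'.
Proof.
  intros Hg l. induction l as [|x l IH]; intros [|y l'] H; try discriminate; [reflexivity|].
  injection H as Hxy Hl. f_equal; auto.
Qed.

Section Embedding.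
Variable V : Type.
Variable E : V -> V -> Prop.
Hypothesis E_irrefl : forall v, ~ E v v.
Hypothesis E_sym : forall u v, E u v -> E v u.
Variables M N : V -> monoid.
Variable f : forall v, M v -> N v.
Hypothesis f_hom : forall v, monoid_hom (M v) (N v) (f v).
Hypothesis f_inj : forall v x y, f v x = f v y -> x = y.

Definition map_letter (x : {v : V & M v}) : {v : V & N v} :=
  existT _ (projT1 x) (f _ (projT2 x)).

Lemma map_letter_inj x y : map_letter x = map_letter y -> x = y.
Proof.
  destruct x as [u a], y as [v b]. unfold map_letter. simpl. intros H.
  assert (u = v) as <- by exact (f_equal (@projT1 _ _) H).
  apply inj_pair2, f_inj in H. now subst.
Qed.

Lemma shuffle_map w w' :
  shuffle V E M w w' -> shuffle V E N (map map_letter w) (map map_letter w').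
Proof.
  induction 1 as [|w2 w3 (a & b & x & y & -> & -> & Hxy) _ IH]; [apply shuffle_refl|].
  apply (shuffle_trans _ _ _ _ _ _ IH). rewrite !map_app. now apply shuffle_swap.
Qed.

Lemma shuffle_map_inv w q : shuffle V E N (map map_letter w) q ->
  exists w', q = map map_letter w' /\ shuffle V E M w w'.
Proof.
  remember (map map_letter w) as mw eqn:Hmw. induction 1 as [|q1 q2 Hswap _ IH].
  { exists w. split; [exact Hmw | apply shuffle_refl]. }
  destruct IH as (w1 & -> & Hw1).
  destruct Hswap as (a & b & x & y & Hm & -> & Hxy).
  apply map_eq_app in Hm as (a' & l & -> & <- & Hm).
  apply map_eq_cons in Hm as (x' & l' & -> & <- & Hm).
  apply map_eq_cons in Hm as (y' & b' & -> & <- & <-).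
  exists (a' ++ y' :: x' :: b'). split; [now rewrite map_app|].
  apply (shuffle_trans _ _ _ _ _ _ Hw1). now apply shuffle_swap.
Qed.

Lemma map_syllable v s : map map_letter (syllable V M v s) = syllable V N v (f v s).
Proof.
  destruct (f_hom v) as [Hf1 _].
  destruct (classic (s = mone (M v))) as [-> | Hs].
  - now rewrite syllable_one, Hf1, syllable_one.
  - rewrite !syllable_nontrivial; [reflexivity | | exact Hs].
    intros Hfs. apply Hs, f_inj. now rewrite Hfs, Hf1.
Qed.

Lemma no_final_map v r : no_final V E M v r -> no_final V E N v (map map_letter r).
Proof.
  intros H r' y Hy Hv. destruct (shuffle_map_inv _ _ Hy) as (w & Hw & Hs).
  symmetry in Hw. apply map_eq_app in Hw as (l1 & l2 & -> & _ & Hl2).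
  destruct l2 as [|y' [|]]; try discriminate. injection Hl2 as <-.
  exact (H l1 y' Hs Hv).
Qed.

Lemma act_map r x : reduced V E M r -> reduced V E N (map map_letter r) ->
  shuffle V E N (act V E N (map map_letter r) (map_letter x)) (map map_letter (act V E M r x)).
Proof.
  intros Hr HrN. destruct x as [v a].
  destruct (reduced_split_final V E M r v Hr) as (r0 & s & H & Hfin).
  pose proof (act_spec V E E_irrefl E_sym M r v r0 s a Hr H Hfin) as HM.
  assert (HN : shuffle V E N (map map_letter r) (map map_letter r0 ++ syllable V N v (f v s))).
  { rewrite <- map_syllable, <- map_app. now apply shuffle_map. }
  apply (shuffle_trans _ _ _ _ _ _
           (act_spec V E E_irrefl E_sym N _ v _ _ (f v a) HrN HN (no_final_map _ _ Hfin))).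
  destruct (f_hom v) as [_ Hfm]. rewrite <- Hfm, <- map_syllable, <- map_app.
  apply shuffle_map. exact (shuffle_sym _ _ E_sym _ _ _ HM).
Qed.

Lemma normal_form_map w :
  shuffle V E N (normal_form V E N (map map_letter w)) (map map_letter (normal_form V E M w)).
Proof.
  induction w as [|x w IH] using rev_ind; [apply shuffle_refl|].
  unfold normal_form in *. rewrite map_app, !fold_left_app. cbn [fold_left map].
  pose proof (reduced_normal_form V E E_irrefl E_sym N (map map_letter w)) as HrN.
  apply (shuffle_trans _ _ _ _ _ _ (act_shuffle V E E_irrefl E_sym N _ _ _ HrN IH)).
  apply act_map; [apply (reduced_normal_form V E E_irrefl E_sym M)|].
  exact (reduced_shuffle _ _ _ _ _ IH HrN).
Qed.

Lemma gp_cong_map w w' : gp_cong E M w w' -> gp_cong E N (map map_letter w) (map map_letter w').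
Proof.
  induction 1 as [w w' [v | v a b | u v m n Huv] | | | | a b w w' _ IH].
  - destruct (f_hom v) as [Hf1 _]. apply gpc_base. simpl. unfold map_letter; simpl.
    rewrite Hf1. apply gpb_one.
  - destruct (f_hom v) as [_ Hfm]. apply gpc_base. simpl. unfold map_letter; simpl.
    rewrite Hfm. apply gpb_mul.
  - apply gpc_base, gpb_comm, Huv.
  - apply gpc_refl.
  - now apply gpc_sym.
  - eapply gpc_trans; eassumption.
  - rewrite !map_app. now apply gpc_ctx.
Qed.

Lemma gp_cong_map_inv w w' :
  gp_cong E N (map map_letter w) (map map_letter w') -> gp_cong E M w w'.
Proof.
  intros H. apply (normal_form_shuffle V E E_irrefl E_sym N) in H.
  assert (Hmap : shuffle V E N (map map_letter (normal_form V E M w))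
                                (map map_letter (normal_form V E M w'))).
  { apply (shuffle_trans _ _ _ _ _ _ (shuffle_sym _ _ E_sym _ _ _ (normal_form_map w))).
    exact (shuffle_trans _ _ _ _ _ _ H (normal_form_map w')). }
  destruct (shuffle_map_inv _ _ Hmap) as (w'' & Hw'' & Hs).
  apply (map_injective _ map_letter_inj) in Hw''. subst w''.
  apply (gpc_trans _ _ _ _ _ (gp_cong_normal_form V E E_irrefl E_sym M w)).
  apply (gpc_trans _ _ _ _ _ (shuffle_gp_cong V E M _ _ Hs)), gpc_sym.
  apply gp_cong_normal_form; assumption.
Qed.

End Embedding.

Theorem corollary1p8 (V : Type) (E : V -> V -> Prop) (M G : V -> monoid) :
  is_graph E ->
  (forall v, is_group (G v)) ->
  (forall v, monoid_embeddable (M v) (G v)) ->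
  gp_embeddable E M G.
Proof.
  intros [E_irrefl E_sym] _ Hemb.
  pose (f v := proj1_sig (constructive_indefinite_description _ (Hemb v))).
  assert (Hf : forall v, monoid_hom (M v) (G v) (f v) /\ forall x y, f v x = f v y -> x = y)
    by (intros v; exact (proj2_sig (constructive_indefinite_description _ (Hemb v)))).
  exists (map (map_letter V M G f)). split; [|split; [|split]].
  - apply gp_cong_map. intros v. apply Hf.
  - apply gp_cong_map_inv; [exact E_irrefl | exact E_sym | intros v; apply Hf ..].
  - apply gpc_refl.
  - intros w w'. rewrite map_app. apply gpc_refl.
Qed.
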